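(* A choice function $C$ is consistent if and only if the assessment $\mathcal{A}_C$ is consistent.
   Context: Let $\mathcal{X}$ be a nonempty set and let $\mathscr{V}$ be the real vector space of all functions $u:\mathcal{X}\to\mathbb{R}$ (options), with pointwise operations. For $u,v\in\mathscr{V}$, $u\le v$ iff $u(x)\le v(x)$ for all $x\in\mathcal{X}$, and $u<v$ iff $u\le v$ and $u\neq v$. Let $\mathscr{V}_{>0}=\{u\in\mathscr{V}:0<u\}$ and $\mathscr{V}^s_{>0}=\{\{u\}:u\in\mathscr{V}_{>0}\}$. Let $\mathscr{Q}$ be the set of all finite subsets of $\mathscr{V}$ (including $\emptyset$). For $A\in\mathscr{Q}$ and $u\in\mathscr{V}$, $A-u=\{v-u:v\in A\}$. For a positive integer $n$, $\mathbb{R}^{n,+}=\{\boldsymbol\lambda\in\mathbb{R}^n:\lambda_j\ge0\ \forall j,\ \sum_j\lambda_j>0\}$, and for $\boldsymbol\lambda\in\mathbb{R}^n$, $\mathbf u=(u_1,\dots,u_n)\in\mathscr{V}^n$, $\boldsymbol\lambda\mathbf u=\sum_{j=1}^n\lambda_ju_j$. A choice function is a map $C:\mathscr{Q}\to\mathscr{Q}$ with $C(A)\subseteq A$ for all $A$; its rejection function is $R_C(A)=A\setminus C(A)$, and $K_C=\{A\in\mathscr{Q}:0\notin C(A\cup\{0\})\}$. $C$ is coherent if: (C0) $C(A)\neq\emptyset$ for all nonempty $A\in\mathscr{Q}$; (C1) for all $A\in\mathscr{Q}$ and $u\in A$: $u\in C(A)\iff 0\in C(A-u)$; (C2) $\{u\}\in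 K_C$ for all $u\in\mathscr{V}_{>0}$; (C3) for all $A,B\in K_C$ and all maps $\boldsymbol\lambda:A\times B\to\mathbb{R}^{2,+}$, $\{\boldsymbol\lambda(\mathbf u)\mathbf u:\mathbf u\in A\times B\}\in K_C$; (C4) $A\subseteq B\Rightarrow R_C(A)\subseteq R_C(B)$ for all $A,B\in\mathscr{Q}$. $\mathcal{C}$ denotes the set of coherent choice functions. For a choice function $C$, $\mathcal C_C=\{C'\in\mathcal C: C'(A)\subseteq C(A)\text{ for all }A\in\mathscr{Q}\}$ and $C$ is called consistent if $\mathcal C_C\neq\emptyset$. A set of desirable option sets is any $K\subseteq\mathscr{Q}$. It is coherent if for all $A,B\in K$: (K0) $A\setminus\{0\}\in K$; (K1) $\{0\}\notin K$; (K2) $\mathscr{V}^s_{>0}\subseteq K$; (K3) $\{\boldsymbol\lambda(\mathbf u)\mathbf u:\mathbf u\in A\times B\}\in K$ for every map $\boldsymbol\lambda:A\times B\to\mathbb{R}^{2,+}$; (K4) $A\cup Q\in K$ for all $Q\in\mathscr{Q}$. $\bar{\mathbf K}$ denotes the set of coherent sets of desirable option sets. An assessment is any subset $\mathcal{A}\subseteq\mathscr{Q}$; $\bar{\mathbf K}(\mathcal A)=\{K\in\bar{\mathbf K}:\mathcal A\subseteq K\}$, and $\mathcal A$ is called consistent if $\bar{\mathbf K}(\mathcal A)\neq\emptyset$. For a choice function $C$, $\mathcal A_C=\{C(A)-u:A\in\mathscr{Q},\ u\in R_C(A)\}$. *)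

From HB Require Import structures.
From mathcomp Require Import all_boot all_order all_algebra.
From mathcomp Require Import all_classical all_reals.
Set Implicit Arguments. Unset Strict Implicit. Unset Printing Implicit Defensive.
Import Order.TTheory GRing.Theory Num.Theory.
Local Open Scope ring_scope.
Local Open Scope classical_set_scope.

Section Defs.
Variables (X : Type) (R : realType).

Definition opt := X -> R.
Definition ozero : opt := fun _ => 0.
Definition osub (u v : opt) : opt := fun x => u x - v x.
Definition olin (a b : R) (u v : opt) : opt := fun x => a * u x + b * v x.

Definition ole (u v : opt) : Prop := forall x, u x <= v x.
Definition olt (u v : opt) : Prop := ole u v /\ u <> v.
Definition opos (u : opt) : Prop := olt ozero u.

Definition optset := set opt.
Definition inQ (A : optset) : Prop := finite_set A.

Definition shift (A : optset) (u : opt) : optset := [set osub v u | v in A].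

Definition pos2 (l : R * R) : Prop := 0 <= l.1 /\ 0 <= l.2 /\ 0 < l.1 + l.2.

Definition lincomb (A B : optset) (lam : opt -> opt -> R * R) : optset :=
  [set olin (lam u v).1 (lam u v).2 u v | u in A & v in B].
Definition admissible (A B : optset) (lam : opt -> opt -> R * R) : Prop :=
  forall u v, A u -> B v -> pos2 (lam u v).

(* choice functions C : Q -> Q with C(A) ⊆ A (values outside Q are irrelevant) *)
Definition choice_fun (C : optset -> optset) : Prop :=
  forall A, inQ A -> C A `<=` A.
Definition rejection (C : optset -> optset) (A : optset) : optset := A `\` C A.
Definition KC (C : optset -> optset) : set optset :=
  [set A | inQ A /\ ~ C (A `|` [set ozero]) ozero].

Definition coherent_choice (C : optset -> optset) : Prop :=
  choice_fun C /\
  (forall A, inQ A -> A !=set0 -> C A !=set0) /\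
  (forall A u, inQ A -> A u -> (C A u <-> C (shift A u) ozero)) /\
  (forall u, opos u -> KC C [set u]) /\
  (forall A B, KC C A -> KC C B -> forall lam, admissible A B lam ->
              KC C (lincomb A B lam)) /\
  (forall A B, inQ A -> inQ B -> A `<=` B ->
              rejection C A `<=` rejection C B).

Definition consistent_choice (C : optset -> optset) : Prop :=
  exists C', coherent_choice C' /\ forall A, inQ A -> C' A `<=` C A.

Definition coherent_K (K : set optset) : Prop :=
  (forall A, K A -> inQ A) /\
  (forall A, K A -> K (A `\ ozero)) /\
  ~ K [set ozero] /\
  (forall u, opos u -> K [set u]) /\
  (forall A B, K A -> K B -> forall lam, admissible A B lam ->
              K (lincomb A B lam)) /\
  (forall A Q, K A -> inQ Q -> K (A `|` Q)).

Definition assessment (Ass : set optset) : Prop := forall A, Ass A -> inQ A.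
Definition consistent_assessment (Ass : set optset) : Prop :=
  exists K, coherent_K K /\ Ass `<=` K.

Definition assessC (C : optset -> optset) : set optset :=
  [set D | exists A u, inQ A /\ rejection C A u /\ D = shift (C A) u].

End Defs.

From mathcomp Require Import all_boot all_order all_algebra.
From mathcomp Require Import all_classical all_reals.
From mathcomp Require Import ring.
Import GRing.Theory Num.Theory.
Set Implicit Arguments. Unset Strict Implicit. Unset Printing Implicit Defensive.
Local Open Scope ring_scope.
Local Open Scope classical_set_scope.

(* The proof rests on the correspondence between coherent choice functions
   and coherent sets of desirable option sets:
   - a coherent C yields the coherent set K_C, and C is recovered from it as
     C(A) = {u in A | A - u notin K_C};
   - a coherent K yields the choice function choice_of K, defined by that
     same formula, which is coherent and satisfies K_{choice_of K} = K.
   The only non-trivial ingredient is the removal lemma: if A - u is in a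
   coherent K, then so is (choice_of K A ∪ {u}) - u, i.e. all other options
   of A rejected by K can be dropped simultaneously.  It is obtained by
   repeatedly removing one rejected option (K_pair, a single application of
   axiom K3), and it also shows that choice_of K never chooses nothing (C0).
   With this, a coherent C' below C gives K_{C'} containing A_C, and a
   coherent K containing A_C gives choice_of K below C. *)

Section Shift.
Variables (X : Type) (R : realType).
Implicit Types (A B : optset X R) (u v w : opt X R).

Lemma inQ_shift A u : inQ A -> inQ (shift A u).
Proof. exact: finite_image. Qed.

Lemma shift0 A : shift A (@ozero X R) = A.
Proof.
have osub0 v : osub v (@ozero X R) = v by apply: funext => x; rewrite /osub subr0.
apply/seteqP; split=> [_ [v Av <-]|v Av]; first by rewrite osub0.
by exists v; rewrite ?osub0.
Qed.

Lemma osubvv v : osub v v = @ozero X R.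
Proof. by apply: funext => x; rewrite /osub subrr. Qed.

Lemma shift_self A u : A u -> shift A u (@ozero X R).
Proof. by move=> Au; exists u; rewrite ?osubvv. Qed.

Lemma shift_sub A B u : A `<=` B -> shift A u `<=` shift B u.
Proof. by move=> AB _ [v Av <-]; exists v => //; apply: AB. Qed.

Lemma osub_inj v w u : osub v u = osub w u -> v = w.
Proof.
move=> E; apply: funext => x; have := congr1 (fun f => f x) E.
by rewrite /osub => /addIr.
Qed.

End Shift.

Definition choice_of (X : Type) (R : realType) (K : set (optset X R))
  (A : optset X R) : optset X R := [set u | A u /\ ~ K (shift A u)].

Section CoherentK.
Variables (X : Type) (R : realType) (K : set (optset X R)).
Hypothesis hK : coherent_K K.
Implicit Types (A B : optset X R) (u v w : opt X R).
Local Notation z := (@ozero X R).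

Lemma K_superset A B : K A -> inQ B -> A `<=` B -> K B.
Proof.
move=> KA QB AB; have [_ [_ [_ [_ [_ K4]]]]] := hK.
by rewrite -(setUidr AB); apply: K4.
Qed.

Lemma K_without0 A : K (A `|` [set z]) -> inQ A -> K A.
Proof.
move=> KA0 QA; have [_ [K0 _]] := hK.
apply: K_superset (K0 _ KA0) QA _.
by move=> w [[//|wz] nwz]; exfalso; apply: nwz.
Qed.

(* Apply K3 to B - v and B - v1 with weights (1, 0), except
   that the element v1 - v of B - v (the only one to be removed) is combined
   with weights (1, 1), giving b - v for b in B \ {v1}, or with (0, 1) when
   paired with 0, giving 0; K0 then discards 0. *)
Lemma K_pair B v v1 : inQ B -> K (shift B v) -> K (shift B v1) ->
  K (shift (B `\ v1) v).
Proof.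
move=> QB KBv KBv1; have [_ [_ [_ [_ [K3 _]]]]] := hK.
pose lam p q : R * R :=
  if pselect (p = osub v1 v) then (if pselect (q = z) then (0, 1) else (1, 1))
  else (1, 0).
have adm : admissible (shift B v) (shift B v1) lam.
  move=> p q _ _; rewrite /lam /pos2.
  case: pselect => ?; [case: pselect => ?|];
    by rewrite /= ?add0r ?addr0 ?lexx ?ler01 ?ltr01 ?addr_gt0.
have QT : inQ (shift (B `\ v1) v) by apply/inQ_shift/finite_setD.
apply: K_without0 => //; apply: K_superset (K3 _ _ KBv KBv1 lam adm) _ _.
  by rewrite /inQ finite_setU; split.
move=> _ [_ [b Bb <-] [_ [b' Bb' <-] <-]].
rewrite /lam; case: pselect => [bv1|nbv1] /=; last first.
  left; exists b; first by split=> // bv1; apply: nbv1; rewrite bv1.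
  by apply: funext => x; rewrite /olin /= mul1r mul0r addr0.
have {bv1} -> := osub_inj bv1; case: pselect => [b'z|nb'z] /=.
  by right; apply: funext => x; rewrite /olin /= mul0r mul1r add0r b'z.
left; exists b'.
  by split=> // b'v1; apply: nb'z; rewrite b'v1 osubvv.
apply: funext => x; rewrite /olin /osub /= !mul1r; ring.
Qed.

Lemma K_remove A S w : inQ A -> finite_set S ->
  (forall x, S x -> K (shift A x)) -> K (shift A w) -> K (shift (A `\` S) w).
Proof.
move=> QA /(@finite_seqP {classic opt X R}) [s ->] {S}.
elim: s w => [|a s IH] w Ss KAw; first by rewrite set_nil setD0.
have Ss' x : x \in s -> K (shift A x) by move=> xs; apply: Ss; rewrite /= in_cons xs orbT.
have -> : A `\` [set` (a :: s)] = (A `\` [set` s]) `\ a.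
  rewrite setDDl; congr (A `\` _); apply/seteqP; split=> x /=.
    by rewrite in_cons => /orP [/eqP ->|xs]; [right|left].
  by rewrite in_cons => -[xs|->]; rewrite ?xs ?orbT ?eqxx.
apply: K_pair; [exact: finite_setD | exact: IH Ss' KAw |].
by apply: IH Ss' _; apply: Ss; rewrite /= mem_head.
Qed.

Lemma K_removal A u : inQ A -> A u -> K (shift A u) ->
  K (shift (choice_of K A `|` [set u]) u).
Proof.
move=> QA Au KAu.
pose S := [set w | A w /\ K (shift A w)] `\ u.
have QS : finite_set S by apply: sub_finite_set QA => w [[]].
have QCu : inQ (choice_of K A `|` [set u]).
  by rewrite /inQ finite_setU; split; [apply: sub_finite_set QA => w []|].
have KASu : K (shift (A `\` S) u) by apply: K_remove => // w [[]].
apply: K_superset KASu (inQ_shift _ QCu) (shift_sub _).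
move=> w [Aw nSw]; have [->|nwu] := pselect (w = u); first by right.
by left; split=> // KAw; apply: nSw.
Qed.

Lemma choice_of_nonempty A : inQ A -> A !=set0 -> choice_of K A !=set0.
Proof.
move=> QA [u Au]; apply: contrapT => nC.
have KAu : K (shift A u).
  by apply: contrapT => nK; apply: nC; exists u.
have [_ [_ [K1 _]]] := hK; apply: K1.
apply: K_superset (K_removal QA Au KAu) (finite_set1 _) _.
by move=> _ [w [Cw|->] <-]; [exfalso; apply: nC; exists w | rewrite /= osubvv].
Qed.

Lemma KC_choice_of A : KC (choice_of K) A <-> K A.
Proof.
have [QK [_ [_ [_ [_ K4]]]]] := hK; rewrite /KC /choice_of /= shift0.
split=> [[QA nC]|KA].
  by apply: K_without0 => //; apply: contrapT => nK; apply: nC; split; [right|].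
split; first exact: QK.
by move=> [_]; apply; apply: K4 => //; apply: finite_set1.
Qed.

Lemma choice_of_coherent : coherent_choice (choice_of K).
Proof.
have [_ [_ [_ [K2 [K3 _]]]]] := hK.
split; first by move=> A _ u [].
split; first exact: choice_of_nonempty.
split.
  move=> A u _ Au; rewrite /choice_of /= shift0.
  by split=> -[_ nK]; split=> //; apply: shift_self.
split; first by move=> u pu; apply/KC_choice_of/K2.
split.
  by move=> A B /KC_choice_of KA /KC_choice_of KB lam adm; apply/KC_choice_of/K3.
move=> A B _ QB AB u [Au nCu].
have KAu : K (shift A u) by apply: contrapT => nK; apply: nCu.
split; first exact: AB.
by move=> [_]; apply; apply: K_superset KAu (inQ_shift _ QB) (shift_sub AB).
Qed.

End CoherentK.

Section CoherentChoice.
Variables (X : Type) (R : realType) (C : optset X R -> optset X R).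
Hypothesis hC : coherent_choice C.
Implicit Types (A Q : optset X R) (u w : opt X R).
Local Notation z := (@ozero X R).

(* K_C is coherent: K0 holds as (A \ {0}) ∪ {0} = A ∪ {0}, K1 follows from
   C0, K2 and K3 are C2 and C3, and K4 is C4 applied to A ∪ {0} ⊆ A ∪ Q ∪ {0}. *)
Lemma KC_coherent : coherent_K (KC C).
Proof.
have [chC [C0 [_ [C2 [C3 C4]]]]] := hC.
split; first by move=> A [].
split.
  move=> A [QA nC]; split; first exact: finite_setD.
  suff -> : (A `\ z) `|` [set z] = A `|` [set z] by [].
  apply/seteqP; split=> w; first by move=> [[Aw _]|->]; [left|right].
  move=> [Aw|->]; last by right.
  by have [->|nwz] := pselect (w = z); [right|left].
split.
  move=> [_ nC]; apply: nC; rewrite setUid.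
  have [w Cw] := C0 _ (finite_set1 z) (ex_intro _ z erefl).
  have wz : w = z := chC _ (finite_set1 z) w Cw.
  by move: Cw; rewrite wz.
split; first exact: C2.
split; first exact: C3.
move=> A Q [QA nC] QQ; split; first by rewrite /inQ finite_setU.
have QAz : inQ (A `|` [set z]) by rewrite /inQ finite_setU; split.
have QAQz : inQ ((A `|` Q) `|` [set z]) by rewrite /inQ !finite_setU; split.
have sub : A `|` [set z] `<=` A `|` Q `|` [set z].
  by move=> w [Aw|->]; [left; left|right].
by have [_] := C4 _ _ QAz QAQz sub z (conj (or_intror erefl) nC).
Qed.

Lemma chosenE A u : inQ A -> A u -> C A u <-> ~ KC C (shift A u).
Proof.
have [_ [_ [C1 _]]] := hC; move=> QA Au; rewrite (C1 _ _ QA Au) /KC /=.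
have -> : shift A u `|` [set z] = shift A u.
  by apply: setUidl => _ ->; apply: shift_self.
split=> [Cz [_ nC] //|nK]; apply: contrapT => nCz.
by apply: nK; split; first exact: inQ_shift.
Qed.

Lemma choice_of_KC A : inQ A -> choice_of (KC C) A = C A.
Proof.
have [chC _] := hC; move=> QA; apply/seteqP; split=> u.
  by move=> [Au nK]; apply/chosenE.
by move=> Cu; have Au := chC _ QA u Cu; split=> //; apply/chosenE.
Qed.

End CoherentChoice.

Section Consistency.
Variables (X : Type) (R : realType) (C : optset X R -> optset X R).
Hypothesis chC : choice_fun C.

(* A coherent C' below C makes every element C(A) - u of A_C desirable:
   u is rejected by C', and the removal lemma drops from A - u all the
   other options rejected by C', leaving at most (C(A) - u) ∪ {0}. *)
Lemma assessC_consistent : consistent_choice C -> consistent_assessment (assessC C).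
Proof.
move=> [C' [hC' C'C]]; have hK := KC_coherent hC'.
exists (KC C'); split => // _ [A [u [QA [[Au nCu] ->]]]].
have KAu : KC C' (shift A u).
  by apply: contrapT => nK; apply: nCu; apply/C'C/chosenE.
have KCu := K_removal hK QA Au KAu; rewrite choice_of_KC // in KCu.
have QCA : inQ (shift (C A) u) by apply/inQ_shift/(sub_finite_set (chC QA)).
suff KCA0 : KC C' (shift (C A) u `|` [set @ozero X R]).
  exact: (K_without0 hK KCA0 QCA).
apply: (K_superset hK KCu); first by rewrite /inQ finite_setU; split.
move=> _ [w [/(C'C _ QA) Cw|->] <-]; first by left; exists w.
by right; apply: osubvv.
Qed.

(* A coherent K containing A_C induces a coherent choice function below C:
   if u is not chosen by C from A, then C(A) - u, hence A - u, lies in K. *)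
Lemma consistent_assessC : consistent_assessment (assessC C) -> consistent_choice C.
Proof.
move=> [K [hK AK]]; exists (choice_of K); split; first exact: choice_of_coherent.
move=> A QA u [Au nKAu]; apply: contrapT => nCu; apply: nKAu.
have KCA : K (shift (C A) u) by apply: AK; exists A, u.
exact: (K_superset hK KCA (inQ_shift _ QA) (shift_sub (chC QA))).
Qed.

End Consistency.

Theorem mainTheorem17 (X : Type) (R : realType) (x0 : X)
  (C : optset X R -> optset X R) :
  choice_fun C ->
  (consistent_choice C <-> consistent_assessment (assessC C)).
Proof.
move=> chC; split; [exact: assessC_consistent | exact: consistent_assessC].
Qed.
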